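(* Let $n\ge 2$ and consider $n+1$ qubits labelled $1,\dots,n+1$. Qubit $1$ holds an arbitrary single-qubit pure state $|\psi\rangle$ to be teleported, and qubits $2,\dots,n+1$ hold an $n$-qubit state $\rho$ (the channel), so the initial state is $\rho'=|\psi\rangle\langle\psi|\otimes\rho$. Qubit $S=2$ is the sender's qubit, qubit $R=n+1$ is the receiver's qubit, and the qubits in $X=\{3,\dots,n\}$ may be held by the sender and/or any number of controllers. Consider a teleportation protocol of the following form: a (possibly non-local) unitary $V$ acting on qubits $[n]=\{1,\dots,n\}$ is applied; then the qubits in $X$ are measured in the basis $\{U^\dagger|t\rangle\}_t$ for some unitary $U$ on the qubits of $X$ ($t$ ranging over computational-basis outcomes of $X$); qubits $1$ and $2$ undergo a Bell measurement; and finally a classically conditioned unitary $W$, depending on all measurement outcomes, is applied to qubit $R$, producing the receiver state $\rho_T$. Define $\rho_X$ as the reduced state of $V\rho' V^\dagger$ on the qubits of $X$, $p_t(U)=\langle t|U\rho_X U^\dagger|t\rangle$, and for $p_t(U)>0$ the conditional two-qubit state of $S$ and $R$ $$\rho_{SR}^t=\frac{\mathrm{Tr}_X\!\left\{\left(U^\dagger|t\rangle\langle t|U\right)_X\,\mathrm{Tr}_1\!\left\{V\rho'V^\dagger\right\}\left(U^\dagger|t\rangle\langle t|U\right)_X\right\}}{p_t(U)}.$$ Define the localizable concurrence $\mathcal{C}_L(\rho)=\max_U\sum_t p_t(U)\,\mathcal{C}(\rho_{SR}^t)$ and the teleportation fidelity $F_T(\rho)=\max_U\sum_t p_t(U)\,F(\rho_{SR}^t)$.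 Then $$\max\left\{\frac{3+\mathcal{C}_L(\rho)}{6},\ \frac{1+2\mathcal{C}_L(\rho)}{3}\right\}\le F_T(\rho)\le\frac{2+\mathcal{C}_L(\rho)}{3}.$$
   Context: $\mathcal{C}(\sigma)$ denotes the Wootters concurrence of a two-qubit state $\sigma$. $F(\sigma)$ denotes the (optimal, average over input states) fidelity of teleporting one qubit using the two-qubit state $\sigma$ as the shared resource in the standard protocol (Bell measurement by the sender, two classical bits, local correction by the receiver); it is a known fact that for every two-qubit state $\sigma$, $\max\{\frac{3+\mathcal{C}(\sigma)}{6},\frac{1+2\mathcal{C}(\sigma)}{3}\}\le F(\sigma)\le \frac{2+\mathcal{C}(\sigma)}{3}$. Subscripts on operators indicate the qubits they act on; $\mathrm{Tr}_1$ is the partial trace over qubit $1$ and $\mathrm{Tr}_X$ the partial trace over the qubits in $X$. *)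

From mathcomp Require Import all_boot all_order all_algebra.
From mathcomp Require Import complex.
From mathcomp Require Import classical_sets reals.
Set Implicit Arguments.
Unset Strict Implicit.
Unset Printing Implicit Defensive.
Import Order.TTheory GRing.Theory Num.Theory.
Local Open Scope ring_scope.

Section Quantum.
Variable R : realType.
Local Notation C := R[i].

(* Linear operators on the Hilbert space with orthonormal (computational)
   basis indexed by a finite type T, written as their matrix entries. *)
Definition op (T : finType) := T -> T -> C.
Definition ket (T : finType) := T -> C.

Definition mulop (T : finType) (A B : op T) : op T :=
  fun i j => \sum_(k : T) A i k * B k j.
Definition adjop (T : finType) (A : op T) : op T := fun i j => (A j i)^*.
Definition idop (T : finType) : op T := fun i j => (i == j)%:R.
Definition trop (T : finType) (A : op T) : C := \sum_(i : T) A i i.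

Definition unitary (T : finType) (U : op T) : Prop :=
  mulop (adjop U) U = @idop T /\ mulop U (adjop U) = @idop T.

Definition is_state (T : finType) (A : op T) : Prop :=
  (forall i j, A i j = (A j i)^*) /\
  (forall v : ket T, 0 <= \sum_(i : T) \sum_(j : T) (v i)^* * A i j * v j) /\
  trop A = 1.

Definition normalized (T : finType) (v : ket T) : Prop :=
  \sum_(i : T) (v i)^* * v i = 1.

(* qubit basis: false = |0>, true = |1> *)
Definition pauliY : op bool := fun i j =>
  match i, j with
  | false, true => Complex 0 (-1)
  | true, false => Complex 0 1
  | _, _ => 0
  end.

Definition tens2 (A B : op bool) : op ((bool * bool)%type) :=
  fun '(i1, i2) '(j1, j2) => A i1 j1 * B i2 j2.

Definition opmx (T : finType) (A : op T) : 'M[C]_#|T| :=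
  \matrix_(i, j) A (enum_val i) (enum_val j).

Definition spectrum (T : finType) (A : op T) : seq C :=
  sval (closed_field_poly_normal (char_poly (opmx A))).

Definition spin_flip (s : op ((bool * bool)%type)) : op ((bool * bool)%type) :=
  let YY := tens2 pauliY pauliY in
  mulop YY (mulop (fun i j => (s i j)^*) YY).

(* Wootters concurrence: max(0, l1 - l2 - l3 - l4), the l_i being the square
   roots of the eigenvalues of sigma sigma~ (which are real and nonnegative
   for a state), in decreasing order. *)
Definition concurrence (s : op ((bool * bool)%type)) : R :=
  let ls := sort (fun a b : R => b <= a)
              [seq Num.sqrt (complex.Re z) | z <- spectrum (mulop s (spin_flip s))] in
  Num.max 0 (ls`_0 - ls`_1 - ls`_2 - ls`_3).

Definition phiplus : ket ((bool * bool)%type) :=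
  fun '(a, b) => if a == b then Complex (Num.sqrt 2)^-1 0 else 0.

(* fully entangled fraction: max over maximally entangled states
   (W (x) 1)|Phi+>, W a single-qubit unitary, of <e|sigma|e> *)
Definition ent_fraction (s : op ((bool * bool)%type)) : R :=
  sup [set y : R | exists W : op bool, unitary W /\
        y = complex.Re (\sum_(i : (bool * bool)%type) \sum_(j : (bool * bool)%type)
              (\sum_(k : (bool * bool)%type) tens2 W (@idop bool) i k * phiplus k)^* * s i j
              * (\sum_(k : (bool * bool)%type) tens2 W (@idop bool) j k * phiplus k))].

(* optimal average fidelity of the standard teleportation protocol
   (Bell measurement, 2 cbits, local unitary correction) with resource sigma,
   by the Horodecki formula F = (2 f + 1)/3, f the fully entangled fraction *)
Definition tele_fidelity (s : op ((bool * bool)%type)) : R :=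
  (2 * ent_fraction s + 1) / 3.

(* Basis of the qubits of X = {3,...,n} (m = n - 2 qubits; qubit 3+k <-> k). *)
Definition Xb (m : nat) := {ffun 'I_m -> bool}.

Section Protocol.
Variable m : nat.
(* psi: state of qubit 1; rho: channel on qubits (S = 2, X, R = n+1);
   V: unitary on qubits (1, S, X) = [n]; U: unitary on X *)
Variables (psi : ket bool) (rho : op ((bool * Xb m * bool)%type))
          (V : op ((bool * bool * Xb m)%type)).

(* full state rho' = |psi><psi| (x) rho, basis ordered (1, S, X, R) *)
Definition rho_full : op ((bool * bool * Xb m * bool)%type) :=
  fun '(a, s, x, r) '(b, s', x', r') =>
    psi a * (psi b)^* * rho (s, x, r) (s', x', r').

Definition V_full : op ((bool * bool * Xb m * bool)%type) :=
  fun '(a, s, x, r) '(b, s', x', r') =>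
    V (a, s, x) (b, s', x') * (r == r')%:R.

Definition evolved : op ((bool * bool * Xb m * bool)%type) :=
  mulop V_full (mulop rho_full (adjop V_full)).

Definition tr1_evolved : op ((bool * Xb m * bool)%type) :=
  fun '(s, x, r) '(s', x', r') => \sum_(a : bool) evolved (a, s, x, r) (a, s', x', r').

Definition rho_X : op (Xb m) :=
  fun x x' => \sum_(a : bool) \sum_(s : bool) \sum_(r : bool)
                evolved (a, s, x, r) (a, s, x', r).

Variable U : op (Xb m).

Definition projU (t : Xb m) : op (Xb m) := fun x x' => (U t x)^* * U t x'.

Definition prob (t : Xb m) : R :=
  complex.Re (mulop U (mulop rho_X (adjop U)) t t).

(* conditional state of S and R (the zero operator when p_t(U) = 0, where it
   only occurs multiplied by p_t(U) = 0) *)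
Definition cond_state (t : Xb m) : op ((bool * bool)%type) :=
  fun '(s, r) '(s', r') =>
    (\sum_(x : Xb m) \sum_(y : Xb m) \sum_(y' : Xb m)
        projU t x y * tr1_evolved (s, y, r) (s', y', r') * projU t y' x)
    / Complex (prob t) 0.

End Protocol.

Definition loc_concurrence m psi rho V : R :=
  sup [set y : R | exists U : op (Xb m), unitary U /\
        y = \sum_(t : Xb m) prob psi rho V U t * concurrence (cond_state psi rho V U t)].

Definition tele_fidelity_T m psi rho V : R :=
  sup [set y : R | exists U : op (Xb m), unitary U /\
        y = \sum_(t : Xb m) prob psi rho V U t * tele_fidelity (cond_state psi rho V U t)].

End Quantum.

From mathcomp Require Import all_boot all_order all_algebra.
From mathcomp Require Import complex.
From mathcomp Require Import classical_sets reals.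
From mathcomp Require Import ring lra.
From mathcomp Require boolp.
Import Order.TTheory GRing.Theory Num.Theory.
Set Implicit Arguments.
Unset Strict Implicit.
Unset Printing Implicit Defensive.
Local Open Scope ring_scope.

(* For a fixed measurement basis U of X, every conditional state rho_SR^t with
   p_t(U) > 0 is a genuine two-qubit state: it is a normalized compression of
   the positive operator V rho' V^dagger.  Since V and U are unitary, the
   p_t(U) sum to 1, so averaging the known two-qubit bounds with these weights
   yields the same affine bounds between sum_t p_t F(rho^t) and
   sum_t p_t C(rho^t).  The bounds are affine with positive slopes, hence they
   pass to the suprema over U.  The crude estimate F <= 3, from the bound 4 on
   the fully entangled fraction, only serves to make these suprema finite. *)

Section BigSums.

Lemma sum_pair (V : nmodType) (A B : finType) (F : A * B -> V) :
  \sum_(p : A * B) F p = \sum_(a : A) \sum_(b : B) F (a, b).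
Proof. by rewrite pair_bigA; apply: eq_bigr => -[]. Qed.

Lemma sum_unit (V : nmodType) (F : unit -> V) : \sum_(u : unit) F u = F tt.
Proof. by rewrite (big_pred1 tt) // => -[]. Qed.

Lemma exchange_big_pair (V : nmodType) (I J K L : finType)
    (F : I -> J -> K -> L -> V) :
  \sum_(i : I) \sum_(j : J) \sum_(k : K) \sum_(l : L) F i j k l
  = \sum_(k : K) \sum_(l : L) \sum_(i : I) \sum_(j : J) F i j k l.
Proof.
under eq_bigr => i _ do rewrite exchange_big.
rewrite exchange_big; apply: eq_bigr => k _.
under eq_bigr => i _ do rewrite exchange_big.
by rewrite exchange_big.
Qed.

Variable S : pzSemiRingType.

Lemma sum_indicatorl (T : finType) (i : T) (F : T -> S) :
  \sum_(k : T) (k == i)%:R * F k = F i.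
Proof.
rewrite (bigD1 i) //= eqxx mul1r big1 ?addr0 // => k /negbTE ->.
by rewrite mul0r.
Qed.

Lemma sum_indicatorr (T : finType) (i : T) (F : T -> S) :
  \sum_(k : T) F k * (k == i)%:R = F i.
Proof.
rewrite (bigD1 i) //= eqxx mulr1 big1 ?addr0 // => k /negbTE ->.
by rewrite mulr0.
Qed.

End BigSums.

Section Operators.
Variable R : realType.
Local Notation C := R[i].

Definition qform (T : finType) (A : op R T) (v : ket R T) : C :=
  \sum_(i : T) \sum_(j : T) (v i)^* * A i j * v j.

Definition hermitian (T : finType) (A : op R T) := forall i j, A i j = (A j i)^*.

Definition psd (T : finType) (A : op R T) :=
  hermitian A /\ forall v, 0 <= qform A v.

Definition sandwich (T T' : finType) (K : T' -> T -> C) (A : op R T) : op R T' :=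
  fun i j => \sum_(k : T) \sum_(l : T) K i k * A k l * (K j l)^*.

Lemma state_psd (T : finType) (A : op R T) : is_state A -> psd A.
Proof. by case=> herA [posA _]. Qed.

Lemma psd_state (T : finType) (A : op R T) : psd A -> trop A = 1 -> is_state A.
Proof. by case. Qed.

Lemma eq_psd (T : finType) (A B : op R T) :
  (forall i j, A i j = B i j) -> psd A -> psd B.
Proof.
move=> eqAB [herA posA]; split=> [i j|v]; first by rewrite -!eqAB.
rewrite (_ : qform B v = qform A v) //.
by apply: eq_bigr => i _; apply: eq_bigr => j _; rewrite eqAB.
Qed.

Lemma qform_sandwich (T T' : finType) (K : T' -> T -> C) (A : op R T) v :
  qform (sandwich K A) v = qform A (fun l => \sum_(j : T') (K j l)^* * v j).
Proof.
rewrite /qform /sandwich.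
transitivity (\sum_(i : T') \sum_(j : T') \sum_(k : T) \sum_(l : T)
    (v i)^* * K i k * A k l * (K j l)^* * v j).
  apply: eq_bigr => i _; apply: eq_bigr => j _.
  rewrite mulr_sumr mulr_suml; apply: eq_bigr => k _.
  by rewrite mulr_sumr mulr_suml; apply: eq_bigr => l _; rewrite !mulrA.
rewrite exchange_big_pair; apply: eq_bigr => k _; apply: eq_bigr => l _.
rewrite rmorph_sum !mulr_suml; apply: eq_bigr => i _.
rewrite mulr_sumr; apply: eq_bigr => j _.
by rewrite rmorphM /= conjCK; ring.
Qed.

Lemma psd_sandwich (T T' : finType) (K : T' -> T -> C) (A : op R T) :
  psd A -> psd (sandwich K A).
Proof.
case=> herA posA; split=> [i j|v]; last by rewrite qform_sandwich.
rewrite /sandwich rmorph_sum exchange_big; apply: eq_bigr => k _.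
rewrite rmorph_sum; apply: eq_bigr => l _.
by rewrite !rmorphM /= conjCK -herA; ring.
Qed.

Lemma psd_sum (I T : finType) (A : I -> op R T) :
  (forall a, psd (A a)) -> psd (fun i j => \sum_(a : I) A a i j).
Proof.
move=> posA; split=> [i j|v].
  by rewrite rmorph_sum; apply: eq_bigr => a _; rewrite (posA a).1.
have -> : qform (fun i j => \sum_(a : I) A a i j) v = \sum_(a : I) qform (A a) v.
  rewrite /qform [RHS]exchange_big; apply: eq_bigr => i _.
  rewrite [RHS]exchange_big; apply: eq_bigr => j _.
  by rewrite mulr_sumr mulr_suml.
by apply: sumr_ge0 => a _; apply: (posA a).2.
Qed.

Lemma psd_scale (T : finType) (A : op R T) (c : C) :
  0 <= c -> psd A -> psd (fun i j => A i j * c).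
Proof.
move=> c_ge0 [herA posA]; split=> [i j|v].
  by rewrite rmorphM /= (conj_Creal (ger0_real c_ge0)) -herA.
have -> : qform (fun i j => A i j * c) v = qform A v * c.
  rewrite /qform mulr_suml; apply: eq_bigr => i _.
  by rewrite mulr_suml; apply: eq_bigr => j _; ring.
exact: mulr_ge0.
Qed.

Lemma sandwich_reindex (T T' Y : finType) (f : T' -> Y -> T) (c : T' -> Y -> C)
    (A : op R T) i j :
  sandwich (fun i k => \sum_(y : Y) c i y * (k == f i y)%:R) A i j
  = \sum_(y : Y) \sum_(y' : Y) c i y * A (f i y) (f j y') * (c j y')^*.
Proof.
transitivity (\sum_(k : T) \sum_(l : T) \sum_(y : Y) \sum_(y' : Y)
   (k == f i y)%:R * ((l == f j y')%:R * (c i y * A k l * (c j y')^* ))).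
  apply: eq_bigr => k _; apply: eq_bigr => l _.
  rewrite rmorph_sum !mulr_suml; apply: eq_bigr => y _.
  rewrite mulr_sumr; apply: eq_bigr => y' _.
  by rewrite rmorphM /= rmorph_nat; ring.
rewrite exchange_big_pair; apply: eq_bigr => y _; apply: eq_bigr => y' _.
under eq_bigr => k _ do rewrite -mulr_sumr sum_indicatorl.
exact: sum_indicatorl.
Qed.

Lemma psd_reindex_weighted (T T' Y : finType) (f : T' -> Y -> T)
    (c : T' -> Y -> C) (A : op R T) :
  psd A ->
  psd (fun i j => \sum_(y : Y) \sum_(y' : Y) c i y * A (f i y) (f j y') * (c j y')^*).
Proof.
move=> /(psd_sandwich (fun i k => \sum_(y : Y) c i y * (k == f i y)%:R)).
by apply: eq_psd => i j; rewrite sandwich_reindex.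
Qed.

Lemma psd_reindex (T T' : finType) (f : T' -> T) (c : T' -> C) (A : op R T) :
  psd A -> psd (fun i j => c i * A (f i) (f j) * (c j)^*).
Proof.
move=> /(psd_reindex_weighted (fun i (_ : unit) => f i) (fun i _ => c i)).
by apply: eq_psd => i j; rewrite !sum_unit.
Qed.

Lemma psd_diag_ge0 (T : finType) (A : op R T) i : psd A -> 0 <= A i i.
Proof.
case=> _ /(_ (fun k => (k == i)%:R)); rewrite /qform.
under eq_bigr => k _ do under eq_bigr => l _ do rewrite rmorph_nat.
under eq_bigr => k _ do rewrite sum_indicatorr.
by rewrite sum_indicatorl.
Qed.

Lemma state_diag_le1 (T : finType) (A : op R T) i : is_state A -> A i i <= 1.
Proof.
move=> stA; rewrite -stA.2.2 /trop (bigD1 i) //= lerDl.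
by apply: sumr_ge0 => k _; apply/psd_diag_ge0/state_psd.
Qed.

Lemma qform_le_card (T : finType) (A : op R T) (e : ket R T) :
  psd A -> (forall i, A i i <= 1) ->
  qform A e <= (\sum_(i : T) (e i)^* * e i) *+ #|T|.
Proof.
move=> posA diag_le1.
have sum_two (i j : T) (a b : C) (F : T -> C) :
    \sum_(k : T) ((k == i)%:R * a + (k == j)%:R * b) * F k = a * F i + b * F j.
  under eq_bigr => k _ do rewrite mulrDl -!mulrA.
  by rewrite big_split /= !sum_indicatorl.
have two_point i j a b : qform A (fun k => (k == i)%:R * a + (k == j)%:R * b) =
    a^* * A i i * a + a^* * A i j * b + b^* * A j i * a + b^* * A j j * b.
  rewrite /qform (eq_bigr (fun k => ((k == i)%:R * a^* + (k == j)%:R * b^*) *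
      \sum_(l : T) ((l == i)%:R * a + (l == j)%:R * b) * A k l)); last first.
    move=> k _; rewrite mulr_sumr; apply: eq_bigr => l _.
    by rewrite rmorphD !rmorphM /= !rmorph_nat; ring.
  by rewrite sum_two !sum_two; ring.
(* positivity of [A] on the vector [e_i |i> - e_j |j>] *)
have pair_le i j : (e i)^* * A i j * e j + (e j)^* * A j i * e i <=
    (e i)^* * e i * A i i + (e j)^* * e j * A j j.
  rewrite -subr_ge0; have := posA.2 (fun k => (k == i)%:R * e i + (k == j)%:R * - e j).
  by rewrite two_point rmorphN /=; congr (_ <= _); ring.
have norm_le i : (e i)^* * e i * A i i <= (e i)^* * e i.
  by apply: ler_piMr => //; rewrite mulrC; exact: mul_conjC_ge0.
rewrite -(ler_pMn2r (_ : 0 < 2)%N) //.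
have -> : qform A e *+ 2 = \sum_(i : T) \sum_(j : T)
    ((e i)^* * A i j * e j + (e j)^* * A j i * e i).
  rewrite mulr2n {2}/qform exchange_big /qform -big_split /=.
  by apply: eq_bigr => i _; rewrite -big_split.
apply: (le_trans (ler_sum _ (fun i _ => ler_sum _ (fun j _ => pair_le i j)))).
apply: (le_trans (ler_sum _ (fun i _ => ler_sum _ (fun j _ =>
  lerD (norm_le i) (norm_le j))))).
rewrite (eq_bigr (fun i => (e i)^* * e i *+ #|T| + \sum_(j : T) (e j)^* * e j));
  last by move=> i _; rewrite big_split /= sumr_const.
by rewrite big_split /= sumrMnl sumr_const -mulr2n.
Qed.

Lemma sandwich_mulop (T : finType) (K A : op R T) i j :
  mulop K (mulop A (adjop K)) i j = sandwich K A i j.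
Proof.
apply: eq_bigr => k _; rewrite mulr_sumr.
by apply: eq_bigr => l _; rewrite mulrA.
Qed.

Lemma trace_sandwich (T T' : finType) (K : T' -> T -> C) (A : op R T) :
  (forall l k, \sum_(i : T') (K i l)^* * K i k = (l == k)%:R) ->
  trop (sandwich K A) = trop A.
Proof.
move=> orthoK.
transitivity (\sum_(k : T) \sum_(l : T) A k l * \sum_(i : T') (K i l)^* * K i k).
  rewrite /trop /sandwich exchange_big; apply: eq_bigr => k _.
  rewrite exchange_big; apply: eq_bigr => l _.
  by rewrite mulr_sumr; apply: eq_bigr => i _; ring.
apply: eq_bigr => k _.
by under eq_bigr => l _ do rewrite orthoK; rewrite sum_indicatorr.
Qed.

Lemma unitary_orthonormal (T : finType) (U : op R T) l k :
  unitary U -> \sum_(i : T) (U i l)^* * U i k = (l == k)%:R.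
Proof. by case=> unitU _; exact: (congr1 (fun M => M l k) unitU). Qed.

Lemma idop_unitary (T : finType) : unitary (@idop R T).
Proof.
have idop_sq : mulop (adjop (@idop R T)) (@idop R T) = @idop R T.
  apply: boolp.funext => i; apply: boolp.funext => j.
  rewrite /mulop /adjop /idop; under eq_bigr => k _ do rewrite rmorph_nat.
  by rewrite sum_indicatorl.
split=> //; rewrite -[RHS]idop_sq; apply: boolp.funext => i; apply: boolp.funext => j.
rewrite /mulop /adjop /idop; apply: eq_bigr => k _.
by rewrite !rmorph_nat (eq_sym k i) (eq_sym j k).
Qed.

End Operators.

Section EntangledFraction.
Variable R : realType.

Definition maxent (W : op R bool) : ket R (bool * bool)%type :=
  fun i => \sum_(k : (bool * bool)%type) tens2 W (@idop R bool) i k * phiplus R k.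

Lemma maxentE W a b : maxent W (a, b) = W a b * real_complex R (Num.sqrt 2)^-1.
Proof.
rewrite /maxent sum_pair /=.
transitivity (\sum_(c : bool) (c == b)%:R * (W a c * real_complex R (Num.sqrt 2)^-1));
  last exact: sum_indicatorl.
apply: eq_bigr => c _.
rewrite (eq_bigr (fun d => (d == b)%:R * (W a c * phiplus R (c, d)))); last first.
  by move=> d _; rewrite /idop /phiplus /= eq_sym; ring.
rewrite sum_indicatorl /phiplus.
by case: eqP => _; rewrite ?mul1r ?mul0r ?mulr0.
Qed.

Lemma maxent_normalized W : unitary W -> normalized (maxent W).
Proof.
move=> [unitW _].
have col_norm b : \sum_(a : bool) (W a b)^* * W a b = 1.
  by have := congr1 (fun M => M b b) unitW; rewrite /mulop /adjop /idop eqxx.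
pose h := real_complex R (Num.sqrt 2)^-1.
have h2 : h^* * h *+ 2 = 1.
  rewrite conj_Creal ?complex_real // -rmorphM -rmorphMn -(rmorph1 (real_complex R)).
  congr (real_complex R _).
  by rewrite -expr2 exprVn sqr_sqrtr ?ler0n // -mulr_natr mulVf ?pnatr_eq0.
rewrite /normalized sum_pair exchange_big -h2.
transitivity (\sum_(b : bool) h^* * h); last by rewrite sumr_const card_bool.
apply: eq_bigr => b _; rewrite -[RHS]mulr1 -(col_norm b) mulr_sumr.
by apply: eq_bigr => a _; rewrite maxentE rmorphM /=; ring.
Qed.

Lemma ent_fraction_le4 (s : op R (bool * bool)%type) :
  is_state s -> ent_fraction s <= 4.
Proof.
move=> st_s; rewrite /ent_fraction; set S := (X in sup X).
have [ne|empty] := boolp.pselect (S !=set0)%classic; last by rewrite sup_out // => -[].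
apply: ge_sup => // _ [W [unitW ->]].
change (complex.Re (qform s (maxent W)) <= 4).
have := qform_le_card (maxent W) (state_psd st_s) (fun i => state_diag_le1 i st_s).
rewrite (maxent_normalized unitW) card_prod card_bool.
have -> : 1 *+ (2 * 2) = real_complex R 4 by rewrite rmorph_nat.
by rewrite lecE => /andP[].
Qed.

Lemma tele_fidelity_le3 (s : op R (bool * bool)%type) :
  is_state s -> tele_fidelity s <= 3.
Proof. by move=> /ent_fraction_le4; rewrite /tele_fidelity; lra. Qed.

End EntangledFraction.

Section Averages.
Variables (R : realType) (I : finType) (p : I -> R).

Lemma avg_le (u v : I -> R) : (forall t, 0 <= p t) ->
  (forall t, 0 < p t -> u t <= v t) -> \sum_(t : I) p t * u t <= \sum_(t : I) p t * v t.
Proof.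
move=> p_ge0 le_uv; apply: ler_sum => t _.
have [p0|p_gt0] := eqVneq (p t) 0; first by rewrite p0 !mul0r.
apply: ler_wpM2l; first exact: p_ge0.
by apply: le_uv; rewrite lt_def p_gt0 p_ge0.
Qed.

Hypothesis p_sum1 : \sum_(t : I) p t = 1.

Lemma avg_const c : \sum_(t : I) p t * c = c.
Proof. by rewrite -mulr_suml p_sum1 mul1r. Qed.

Lemma avg_affine a b (g : I -> R) :
  \sum_(t : I) p t * (a + b * g t) = a + b * \sum_(t : I) p t * g t.
Proof.
under eq_bigr => t _ do rewrite mulrDr mulrCA.
by rewrite big_split /= avg_const mulr_sumr.
Qed.

End Averages.

Section Suprema.
Variables (R : realType) (X : Type) (P : X -> Prop).
Local Notation img f := [set y | exists x, P x /\ y = f x]%classic.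

Lemma has_sup_img (f : X -> R) x0 M :
  P x0 -> (forall x, P x -> f x <= M) -> has_sup (img f).
Proof.
move=> Px0 f_le; split; first by exists (f x0), x0.
by exists M => _ [x [Px ->]]; apply: f_le.
Qed.

Lemma le_sup_affine (c f : X -> R) a b : has_sup (img c) -> has_sup (img f) ->
  (forall x, P x -> a + b * c x <= f x) -> 0 < b -> a + b * sup (img c) <= sup (img f).
Proof.
move=> [cne _] supf le_cf b_gt0; rewrite -lerBrDl mulrC -ler_pdivlMr //.
apply: ge_sup => // _ [x [Px ->]]; rewrite ler_pdivlMr // mulrC lerBrDl.
by apply: le_trans (le_cf x Px) _; apply: sup_upper_bound => //; exists x.
Qed.

Lemma sup_le_affine (c f : X -> R) a b : has_sup (img c) -> (img f !=set0)%classic ->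
  (forall x, P x -> f x <= a + b * c x) -> 0 <= b -> sup (img f) <= a + b * sup (img c).
Proof.
move=> supc fne le_fc b_ge0; apply: ge_sup => // _ [x [Px ->]].
apply: le_trans (le_fc x Px) _; rewrite lerD2l ler_wpM2l //.
by apply: sup_upper_bound => //; exists x.
Qed.

End Suprema.

Section Protocol.
Variables (R : realType) (m : nat) (psi : ket R bool)
  (rho : op R (bool * Xb m * bool)%type) (V : op R (bool * bool * Xb m)%type).
Hypotheses (psi_normalized : normalized psi) (rho_state : is_state rho)
  (V_unitary : unitary V).
Hypothesis two_qubit_bounds : forall s : op R (bool * bool)%type, is_state s ->
  Num.max ((3 + concurrence s) / 6) ((1 + 2 * concurrence s) / 3) <= tele_fidelity s
  /\ tele_fidelity s <= (2 + concurrence s) / 3.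
Local Notation Idx := (bool * bool * Xb m * bool)%type.
Local Notation E := (evolved psi rho V).
Local Notation T1 := (tr1_evolved psi rho V).

Lemma rho_full_psd : psd (rho_full psi rho).
Proof.
have := psd_reindex (fun i : Idx => let '(_, s, x, r) := i in (s, x, r))
  (fun i : Idx => let '(a, _, _, _) := i in psi a) (state_psd rho_state).
by apply: eq_psd => -[[[a s] x] r] [[[b s'] x'] r'] /=; ring.
Qed.

Lemma trace_rho_full : trop (rho_full psi rho) = 1.
Proof.
transitivity (\sum_(a : bool) (psi a)^* * psi a * trop rho).
  rewrite /trop !sum_pair; apply: eq_bigr => a _.
  rewrite mulr_sumr; apply: eq_bigr => s _; rewrite mulr_sumr; apply: eq_bigr => x _.
  by rewrite mulr_sumr; apply: eq_bigr => r _ /=; ring.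
by rewrite rho_state.2.2; under eq_bigr do rewrite mulr1; exact: psi_normalized.
Qed.

Lemma V_full_orthonormal l k :
  \sum_(i : Idx) (V_full V i l)^* * V_full V i k = (l == k)%:R.
Proof.
case: l => [[[b s] x] r]; case: k => [[[b' s'] x'] r'].
rewrite sum_pair xpair_eqE -mulnb natrM.
rewrite -(unitary_orthonormal (b, s, x) (b', s', x') V_unitary) mulr_suml.
apply: eq_bigr => -[[a s0] x0] _ /=.
set v := V (a, s0, x0) (b, s, x); set v' := V (a, s0, x0) (b', s', x').
rewrite (eq_bigr (fun r0 => (r0 == r)%:R * (v^* * v' * (r0 == r')%:R))).
  exact: sum_indicatorl.
by move=> r0 _; rewrite rmorphM /= rmorph_nat; ring.
Qed.

Lemma evolved_sandwich i j : E i j = sandwich (V_full V) (rho_full psi rho) i j.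
Proof. exact: sandwich_mulop. Qed.

Lemma evolved_psd : psd E.
Proof.
have := psd_sandwich (V_full V) rho_full_psd.
by apply: eq_psd => i j; rewrite evolved_sandwich.
Qed.

Lemma trace_evolved : trop E = 1.
Proof.
rewrite -trace_rho_full -(trace_sandwich (rho_full psi rho) V_full_orthonormal).
by apply: eq_bigr => i _; rewrite evolved_sandwich.
Qed.

Lemma tr1_evolved_psd : psd T1.
Proof.
have := psd_sum (fun a => psd_reindex
  (fun i : bool * Xb m * bool => let '(s, x, r) := i in (a, s, x, r))
  (fun _ => 1) evolved_psd).
apply: eq_psd => -[[s x] r] [[s' x'] r'] /=.
by apply: eq_bigr => a _; rewrite conjC1 mul1r mulr1.
Qed.

Lemma rho_XE y y' :
  rho_X psi rho V y y' = \sum_(s : bool) \sum_(r : bool) T1 (s, y, r) (s, y', r).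
Proof. by rewrite /rho_X exchange_big; apply: eq_bigr => s _; rewrite exchange_big. Qed.

Lemma trace_rho_X : trop (rho_X psi rho V) = 1.
Proof.
rewrite -trace_evolved /trop !sum_pair exchange_big; apply: eq_bigr => a _.
rewrite exchange_big; apply: eq_bigr => s _.
by rewrite exchange_big.
Qed.

Variable U : op R (Xb m).

Definition cond_numer (t : Xb m) : op R (bool * bool)%type :=
  fun i j => \sum_(y : Xb m) \sum_(y' : Xb m)
    U t y * T1 (i.1, y, i.2) (j.1, y', j.2) * (U t y')^*.

Lemma cond_numer_psd t : psd (cond_numer t).
Proof.
exact: (psd_reindex_weighted (fun (i : bool * bool) y => (i.1, y, i.2))
  (fun _ y => U t y) tr1_evolved_psd).
Qed.

Lemma trace_cond_numer t : trop (cond_numer t) = sandwich U (rho_X psi rho V) t t.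
Proof.
rewrite /trop sum_pair /cond_numer /= exchange_big_pair; apply: eq_bigr => y _.
apply: eq_bigr => y' _; rewrite rho_XE mulr_sumr mulr_suml; apply: eq_bigr => s _.
by rewrite mulr_sumr mulr_suml.
Qed.

Lemma trace_cond_numer_ge0 t : 0 <= trop (cond_numer t).
Proof. by apply: sumr_ge0 => i _; apply/psd_diag_ge0/cond_numer_psd. Qed.

Lemma probE t : Complex (prob psi rho V U t) 0 = sandwich U (rho_X psi rho V) t t.
Proof.
have := trace_cond_numer_ge0 t; rewrite trace_cond_numer => /ger0_real/RRe_real.
by rewrite /prob sandwich_mulop.
Qed.

Lemma prob_ge0 t : 0 <= prob psi rho V U t.
Proof.
have := trace_cond_numer_ge0 t.
by rewrite trace_cond_numer -probE lecE => /andP[].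
Qed.

Hypothesis U_unitary : unitary U.

Lemma sum_prob : \sum_(t : Xb m) prob psi rho V U t = 1.
Proof.
suff : Complex (\sum_(t : Xb m) prob psi rho V U t) 0 = 1 by case.
rewrite -[LHS]/(real_complex R _) rmorph_sum /=.
under eq_bigr => t _ do rewrite [real_complex R _]probE.
rewrite -trace_rho_X; apply: trace_sandwich => l k.
exact: unitary_orthonormal.
Qed.

Lemma cond_stateE t i j :
  cond_state psi rho V U t i j = cond_numer t i j / Complex (prob psi rho V U t) 0.
Proof.
case: i => s r; case: j => s' r'; congr (_ / _).
(* the projector [U^dagger |t><t| U] only contributes the row [U t], of norm 1 *)
have row_norm : \sum_(x : Xb m) (U t x)^* * U t x = 1.
  rewrite (eq_bigr (fun x => U t x * (U t x)^*)) => [|x _]; last exact: mulrC.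
  by apply: etrans (congr1 (fun M => M t t) U_unitary.2) _; rewrite /idop eqxx.
rewrite -[RHS]mul1r -row_norm mulr_suml; apply: eq_bigr => x _.
rewrite mulr_sumr; apply: eq_bigr => y _; rewrite mulr_sumr.
by apply: eq_bigr => y' _; rewrite /projU; ring.
Qed.

Lemma cond_state_is_state t :
  0 < prob psi rho V U t -> is_state (cond_state psi rho V U t).
Proof.
move=> p_gt0; set p := Complex (prob psi rho V U t) 0.
have pC_gt0 : 0 < p by rewrite ltcE /= eqxx.
apply: psd_state.
  have pinv_ge0 : 0 <= p^-1 by rewrite invr_ge0 ltW.
  have := psd_scale pinv_ge0 (cond_numer_psd t).
  by apply: eq_psd => i j; rewrite cond_stateE.
rewrite /trop (eq_bigr (fun i => cond_numer t i i / p)) => [|i _];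
  last exact: cond_stateE.
by rewrite -mulr_suml -/(trop (cond_numer t)) trace_cond_numer -probE mulfV // gt_eqF.
Qed.

Definition avg_concurrence : R :=
  \sum_(t : Xb m) prob psi rho V U t * concurrence (cond_state psi rho V U t).

Definition avg_fidelity : R :=
  \sum_(t : Xb m) prob psi rho V U t * tele_fidelity (cond_state psi rho V U t).

Lemma avg_fidelity_bounds :
  [/\ 2^-1 + 6^-1 * avg_concurrence <= avg_fidelity,
      3^-1 + (2/3) * avg_concurrence <= avg_fidelity,
      avg_fidelity <= 2/3 + 3^-1 * avg_concurrence
    & avg_fidelity <= 3].
Proof.
have bounds t : 0 < prob psi rho V U t ->
    let s := cond_state psi rho V U t in
    [/\ 2^-1 + 6^-1 * concurrence s <= tele_fidelity s,
        3^-1 + (2/3) * concurrence s <= tele_fidelity s,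
        tele_fidelity s <= 2/3 + 3^-1 * concurrence s
      & tele_fidelity s <= 3].
  move=> /cond_state_is_state st_s s.
  have [+ hi] := two_qubit_bounds st_s; rewrite ge_max => /andP[lo1 lo2].
  have := tele_fidelity_le3 st_s; split; lra.
rewrite /avg_fidelity /avg_concurrence.
split; [rewrite -(avg_affine sum_prob) .. | rewrite -[3](avg_const sum_prob)];
  by apply: (avg_le prob_ge0) => t /bounds [].
Qed.

End Protocol.

Lemma loc_concurrenceE (R : realType) (m : nat) psi rho V :
  @loc_concurrence R m psi rho V
  = sup [set y | exists U, unitary U /\ y = avg_concurrence psi rho V U]%classic.
Proof. by []. Qed.

Lemma tele_fidelity_TE (R : realType) (m : nat) psi rho V :
  @tele_fidelity_T R m psi rho V
  = sup [set y | exists U, unitary U /\ y = avg_fidelity psi rho V U]%classic.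
Proof. by []. Qed.

Unset Implicit Arguments.

Theorem proposition1 (R : realType) (m : nat)
  (* the known fact, for every two-qubit state sigma *)
  (known : forall s : op R ((bool * bool)%type), is_state s ->
      Num.max ((3 + concurrence s) / 6) ((1 + 2 * concurrence s) / 3)
        <= tele_fidelity s
      /\ tele_fidelity s <= (2 + concurrence s) / 3)
  (psi : ket R bool) (rho : op R ((bool * Xb m * bool)%type))
  (V : op R ((bool * bool * Xb m)%type)) :
  normalized psi -> is_state rho -> unitary V ->
  Num.max ((3 + loc_concurrence psi rho V) / 6)
          ((1 + 2 * loc_concurrence psi rho V) / 3)
    <= tele_fidelity_T psi rho V
  /\ tele_fidelity_T psi rho V <= (2 + loc_concurrence psi rho V) / 3.
Proof.
move=> psi_normalized rho_state V_unitary.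
rewrite loc_concurrenceE tele_fidelity_TE.
set c := avg_concurrence psi rho V; set f := avg_fidelity psi rho V.
have bounds := avg_fidelity_bounds psi_normalized rho_state V_unitary known.
have lo1 U : unitary U -> 2^-1 + 6^-1 * c U <= f U by move=> /bounds[].
have lo2 U : unitary U -> 3^-1 + (2/3) * c U <= f U by move=> /bounds[].
have hi U : unitary U -> f U <= 2/3 + 3^-1 * c U by move=> /bounds[].
have le3 U : unitary U -> f U <= 3 by move=> /bounds[].
have id_unitary := idop_unitary R (Xb m).
have supF := has_sup_img id_unitary le3.
have supC : has_sup [set y | exists U, unitary U /\ y = c U]%classic.
  apply: (has_sup_img (M := 4) id_unitary) => U uU.
  by have := lo2 U uU; have := le3 U uU; lra.
split; last by have := sup_le_affine supC supF.1 hi; lra.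
rewrite ge_max; apply/andP; split.
- by have := le_sup_affine supC supF lo1; lra.
- by have := le_sup_affine supC supF lo2; lra.
Qed.
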